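(* Let $(M,g)$ be a four-dimensional oriented smooth Lorentzian manifold with Levi-Civita connection $\nabla$. Let (a) $K^\mu$ be a smooth vector field with values in $\mathrm{Herm}(2)$ satisfying $K^\mu\tilde K^\nu+K^\nu\tilde K^\mu=2g^{\mu\nu}e$ for all $\mu,\nu$ and $\nabla_\mu\pi_+(K^\mu)=0$; (b) $A_\mu$ and $C_\mu$ be smooth covector fields with values in $\mathfrak{u}(2)$ and $\mathfrak{su}(2)$ respectively; (c) $\Psi:M\to\mathrm{Mat}(2,\mathbb{C})$ be a smooth function. Suppose $$iK^\mu(\nabla_\mu\Psi-C_\mu\Psi+\Psi A_\mu)=0.$$ Then $$\big(\nabla_\mu(\Psi^\dagger iK^\mu\Psi)-[A_\mu,\Psi^\dagger iK^\mu\Psi]\big)-\Psi^\dagger\big(\nabla_\mu\pi_-(iK^\mu)-[C_\mu,\pi_-(iK^\mu)]\big)\Psi=0.$$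
   Context: Repeated indices are summed; Greek indices are raised/lowered with $g$. $e$ is the $2\times2$ identity matrix; $\mathrm{Herm}(2)$ = Hermitian $2\times2$ matrices; $\mathfrak{u}(2)$ = anti-Hermitian $2\times 2$ matrices; $\mathfrak{su}(2)$ = traceless elements of $\mathfrak{u}(2)$; $\dagger$ is the Hermitian conjugate. For $A\in\mathrm{Mat}(2,\mathbb{C})$: $\pi_+(A)=\tfrac12(\operatorname{tr}A)e$, $\pi_-(A)=A-\pi_+(A)$, $\tilde A=\pi_+(A)-\pi_-(A)$. Products of matrix-valued tensor fields are matrix products of components; the covariant derivative of a matrix-valued tensor field $V=v_a\sigma^a$ (Pauli basis $\sigma^0=e,\sigma^1,\sigma^2,\sigma^3$, complex tensor fields $v_a$) is $(\nabla v_a)\sigma^a$; on a matrix-valued function it is the ordinary derivative. *)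

From HB Require Import structures.
From mathcomp Require Import all_boot all_order all_algebra.
From mathcomp Require Import all_classical all_reals all_analysis.
From mathcomp Require Import complex.
Set Implicit Arguments. Unset Strict Implicit. Unset Printing Implicit Defensive.
Import Order.TTheory GRing.Theory Num.Theory.
Import numFieldNormedType.Exports.
Local Open Scope classical_set_scope.
Local Open Scope ring_scope.

(* A coordinate chart of the spacetime: points are row vectors of R^4,
   the manifold is modelled by an open set U of R^4. *)
Notation pt R := ('rV[R]_4).

Definition ebas (R : realType) (mu : 'I_4) : pt R := delta_mx 0 mu.

Definition pd (R : realType) (mu : 'I_4) (f : pt R -> R) : pt R -> R :=
  fun x => 'D_(ebas R mu) f x.

Definition iterpd (R : realType) (s : seq 'I_4) (f : pt R -> R) : pt R -> R :=
  foldr (fun mu h => pd mu h) f s.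

Definition smooth_on (R : realType) (U : set (pt R)) (f : pt R -> R) : Prop :=
  forall (s : seq 'I_4) (x : pt R), U x ->
    {for x, continuous (iterpd s f)} /\
    forall mu : 'I_4, derivable (iterpd s f) x (ebas R mu).

Notation cmx R := ('M[R[i]]_2).

Definition smoothM (R : realType) (U : set (pt R)) (F : pt R -> cmx R) : Prop :=
  forall i j : 'I_2,
    smooth_on U (fun x => complex.Re (F x i j)) /\ smooth_on U (fun x => complex.Im (F x i j)).

Definition pdM (R : realType) (mu : 'I_4) (F : pt R -> cmx R) : pt R -> cmx R :=
  fun x => \matrix_(i, j)
    Complex (pd mu (fun y => complex.Re (F y i j)) x) (pd mu (fun y => complex.Im (F y i j)) x).

Definition hconj (R : realType) (A : cmx R) : cmx R := (map_mx (@conjc R) A)^T.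

Definition herm2 (R : realType) (A : cmx R) : Prop := hconj A = A.
Definition aherm2 (R : realType) (A : cmx R) : Prop := hconj A = - A.
Definition in_su2 (R : realType) (A : cmx R) : Prop :=
  aherm2 A /\ \tr A = 0.

Definition pip (R : realType) (A : cmx R) : cmx R := (\tr A / 2%:R)%:M.
Definition pim (R : realType) (A : cmx R) : cmx R := A - pip A.
Definition tld (R : realType) (A : cmx R) : cmx R := pip A - pim A.

Definition imul (R : realType) (A : cmx R) : cmx R := (Complex 0 1) *: A.

Definition comm (R : realType) (A B : cmx R) : cmx R := A *m B - B *m A.

Definition rc (R : realType) (r : R) : R[i] := Complex r 0.

Definition lorentz_sig (R : realType) (G : 'M[R]_4) : Prop :=
  exists P : 'M[R]_4, P \in unitmx /\
    (P^T *m G *m P = diag_mx (\row_(k < 4) (if k == 0 then 1 else -1)) \/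
     P^T *m G *m P = diag_mx (\row_(k < 4) (if k == 0 then -1 else 1))).

Definition lorentzian_metric (R : realType) (U : set (pt R))
    (g : pt R -> 'M[R]_4) : Prop :=
  (forall mu nu, smooth_on U (fun x => g x mu nu)) /\
  (forall x, U x -> (g x)^T = g x /\ lorentz_sig (g x)).

Definition ginv (R : realType) (g : pt R -> 'M[R]_4) (x : pt R) : 'M[R]_4 :=
  invmx (g x).

Definition christoffel (R : realType) (g : pt R -> 'M[R]_4)
    (l mu nu : 'I_4) (x : pt R) : R :=
  2%:R^-1 * \sum_(s < 4) ginv g x l s *
    (pd mu (fun y => g y s nu) x + pd nu (fun y => g y s mu) x
     - pd s (fun y => g y mu nu) x).

(* Covariant divergence nabla_mu V^mu of a matrix-valued vector field V^mu
   (componentwise in the constant Pauli basis, i.e. entrywise):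
   nabla_mu V^mu = d_mu V^mu + Gamma^mu_{mu l} V^l. *)
Definition divM (R : realType) (g : pt R -> 'M[R]_4)
    (V : 'I_4 -> pt R -> cmx R) (x : pt R) : cmx R :=
  \sum_(mu < 4) pdM mu (V mu) x +
  \sum_(mu < 4) \sum_(l < 4) rc (christoffel g mu mu l x) *: V l x.

From HB Require Import structures.
From mathcomp Require Import all_boot all_order all_algebra.
From mathcomp Require Import all_classical all_reals all_analysis.
From mathcomp Require Import complex.
From mathcomp Require Import ring.
Import GRing.Theory.
Import numFieldNormedType.Exports.
Local Open Scope ring_scope.
Set Implicit Arguments. Unset Strict Implicit.

(* Write J^mu = Psi^+ iK^mu Psi.  The Leibniz rule for the covariant divergence
   gives nabla_mu J^mu = (d_mu Psi)^+ iK^mu Psi + Psi^+ iK^mu d_mu Psi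
   + Psi^+ (nabla_mu iK^mu) Psi.  Since nabla_mu pi_+(K^mu) = 0 we have
   nabla_mu pi_-(iK^mu) = nabla_mu (iK^mu), and [C_mu, pi_-(iK^mu)] = [C_mu, iK^mu]
   because pi_+ is scalar.  As iK^mu, A_mu and C_mu are anti-Hermitian, the
   left-hand side collapses to Psi^+ E - E^+ Psi with
   E = iK^mu (d_mu Psi - C_mu Psi + Psi A_mu), which vanishes by the Dirac
   equation. *)

Section ComplexParts.
Variable R : realType.

Lemma complex_ReM (z w : R[i]) :
  complex.Re (z * w) = complex.Re z * complex.Re w - complex.Im z * complex.Im w.
Proof. by case: z w => ? ? []. Qed.

Lemma complex_ImM (z w : R[i]) :
  complex.Im (z * w) = complex.Re z * complex.Im w + complex.Im z * complex.Re w.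
Proof. by case: z w => ? ? []. Qed.

End ComplexParts.

Section ComplexDerivative.
Variables (R : realType) (V : normedModType R) (x v : V).

Definition is_cderive (f : V -> R[i]) (d : R[i]) : Prop :=
  is_derive x v (fun y => complex.Re (f y)) (complex.Re d) /\
  is_derive x v (fun y => complex.Im (f y)) (complex.Im d).

Lemma eq_is_cderive (f g : V -> R[i]) d :
  f =1 g -> is_cderive f d -> is_cderive g d.
Proof. by move=> /funext <-. Qed.

Lemma is_cderive_cst (c : R[i]) : is_cderive (fun=> c) 0.
Proof. by split; apply: is_derive_cst. Qed.

Lemma is_cderiveD (f g : V -> R[i]) df dg :
  is_cderive f df -> is_cderive g dg -> is_cderive (fun y => f y + g y) (df + dg).
Proof.
move=> [fRe fIm] [gRe gIm]; split; rewrite raddfD.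
- have -> : (fun y => complex.Re (f y + g y)) =
      (fun y => complex.Re (f y)) + (fun y => complex.Re (g y)).
    by apply/funext => y; rewrite /= raddfD.
  exact: is_deriveD.
- have -> : (fun y => complex.Im (f y + g y)) =
      (fun y => complex.Im (f y)) + (fun y => complex.Im (g y)).
    by apply/funext => y; rewrite /= raddfD.
  exact: is_deriveD.
Qed.

Lemma is_cderiveN (f : V -> R[i]) df :
  is_cderive f df -> is_cderive (fun y => - f y) (- df).
Proof.
move=> [fRe fIm]; split; rewrite raddfN.
- have -> : (fun y => complex.Re (- f y)) = - (fun y => complex.Re (f y)).
    by apply/funext => y; rewrite /= raddfN.
  exact: is_deriveN.
- have -> : (fun y => complex.Im (- f y)) = - (fun y => complex.Im (f y)).
    by apply/funext => y; rewrite /= raddfN.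
  exact: is_deriveN.
Qed.

Lemma is_cderiveM (f g : V -> R[i]) df dg :
  is_cderive f df -> is_cderive g dg ->
  is_cderive (fun y => f y * g y) (df * g x + f x * dg).
Proof.
move=> [fRe fIm] [gRe gIm]; split.
- have -> : (fun y => complex.Re (f y * g y)) =
      (fun y => complex.Re (f y)) * (fun y => complex.Re (g y)) -
      (fun y => complex.Im (f y)) * (fun y => complex.Im (g y)).
    by apply/funext => y; rewrite /= complex_ReM.
  apply: is_derive_eq.
  by rewrite [RHS]raddfD /= !complex_ReM /GRing.scale /=; ring.
- have -> : (fun y => complex.Im (f y * g y)) =
      (fun y => complex.Re (f y)) * (fun y => complex.Im (g y)) +
      (fun y => complex.Im (f y)) * (fun y => complex.Re (g y)).
    by apply/funext => y; rewrite /= complex_ImM.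
  apply: is_derive_eq.
  by rewrite [RHS]raddfD /= !complex_ImM /GRing.scale /=; ring.
Qed.

Lemma is_cderiveJ (f : V -> R[i]) df :
  is_cderive f df -> is_cderive (fun y => (f y)^*%C) df^*%C.
Proof.
move=> [fRe fIm]; split.
- have -> : (fun y => complex.Re (f y)^*%C) = (fun y => complex.Re (f y)).
    by apply/funext => y; case: (f y).
  by case: df fRe {fIm}.
- have -> : (fun y => complex.Im (f y)^*%C) = (fun y => - complex.Im (f y)).
    by apply/funext => y; case: (f y).
  by case: df fIm {fRe} => ? ? /= fIm; apply: is_deriveN.
Qed.

Lemma is_cderive_sum (I : Type) (r : seq I) (f : I -> V -> R[i]) (df : I -> R[i]) :
  (forall k, is_cderive (f k) (df k)) ->
  is_cderive (fun y => \sum_(k <- r) f k y) (\sum_(k <- r) df k).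
Proof.
move=> dfk; elim: r => [|a r IHr].
  by rewrite big_nil; apply: eq_is_cderive (is_cderive_cst 0) => y; rewrite big_nil.
rewrite big_cons; apply: eq_is_cderive (is_cderiveD (dfk a) IHr) => y.
by rewrite big_cons.
Qed.

End ComplexDerivative.

Section MatrixDerivative.
Variables (R : realType) (V : normedModType R) (x v : V).

Definition is_mxderive m n (F : V -> 'M[R[i]]_(m, n)) (D : 'M[R[i]]_(m, n)) :=
  forall i j, is_cderive x v (fun y => F y i j) (D i j).

Lemma is_mxderiveD m n (F G : V -> 'M[R[i]]_(m, n)) DF DG :
  is_mxderive F DF -> is_mxderive G DG -> is_mxderive (fun y => F y + G y) (DF + DG).
Proof.
move=> dF dG i j; rewrite mxE.
by apply: eq_is_cderive (is_cderiveD (dF i j) (dG i j)) => y; rewrite mxE.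
Qed.

Lemma is_mxderiveN m n (F : V -> 'M[R[i]]_(m, n)) DF :
  is_mxderive F DF -> is_mxderive (fun y => - F y) (- DF).
Proof.
move=> dF i j; rewrite mxE.
by apply: eq_is_cderive (is_cderiveN (dF i j)) => y; rewrite mxE.
Qed.

Lemma is_mxderiveB m n (F G : V -> 'M[R[i]]_(m, n)) DF DG :
  is_mxderive F DF -> is_mxderive G DG -> is_mxderive (fun y => F y - G y) (DF - DG).
Proof. by move=> dF dG; apply/is_mxderiveD/is_mxderiveN. Qed.

Lemma is_mxderiveZ m n (c : R[i]) (F : V -> 'M[R[i]]_(m, n)) DF :
  is_mxderive F DF -> is_mxderive (fun y => c *: F y) (c *: DF).
Proof.
move=> dF i j; rewrite mxE -[c * _]add0r -(mul0r (F x i j)).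
by apply: eq_is_cderive (is_cderiveM (is_cderive_cst x v c) (dF i j)) => y; rewrite mxE.
Qed.

Lemma is_mxderiveM m n p (F : V -> 'M[R[i]]_(m, n)) (G : V -> 'M[R[i]]_(n, p)) DF DG :
  is_mxderive F DF -> is_mxderive G DG ->
  is_mxderive (fun y => F y *m G y) (DF *m G x + F x *m DG).
Proof.
move=> dF dG i j; rewrite !mxE -big_split.
apply: eq_is_cderive (is_cderive_sum _ (fun k => is_cderiveM (dF i k) (dG k j))) => y.
by rewrite mxE.
Qed.

Lemma is_mxderive_hconj (F : V -> cmx R) DF :
  is_mxderive F DF -> is_mxderive (fun y => hconj (F y)) (hconj DF).
Proof.
move=> dF i j; rewrite !mxE.
by apply: eq_is_cderive (is_cderiveJ (dF j i)) => y; rewrite !mxE.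
Qed.

Lemma is_mxderive_pip (F : V -> cmx R) DF :
  is_mxderive F DF -> is_mxderive (fun y => pip (F y)) (pip DF).
Proof.
move=> dF i j; rewrite /pip mxE.
have dtr : is_cderive x v (fun y => \tr (F y) / 2%:R) (\tr DF / 2%:R).
  have dtrF := is_cderive_sum (index_enum _) (fun k => dF k k).
  have := is_cderiveM dtrF (is_cderive_cst x v 2%:R^-1).
  by rewrite mulr0 addr0.
have [<-|neq_ij] := eqVneq i j.
  by rewrite mulr1n; apply: eq_is_cderive dtr => y; rewrite mxE eqxx mulr1n.
rewrite mulr0n.
by apply: eq_is_cderive (is_cderive_cst x v 0) => y; rewrite mxE (negbTE neq_ij).
Qed.

End MatrixDerivative.

Lemma is_mxderive_pdM (R : realType) mu (F : pt R -> cmx R) x D :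
  is_mxderive x (ebas R mu) F D -> pdM mu F x = D.
Proof.
move=> dF; apply/matrixP => i j; have [dRe dIm] := dF i j.
by rewrite mxE /pd !derive_val; case: (D i j).
Qed.

Lemma smoothM_is_mxderive (R : realType) (U : set (pt R)) mu (F : pt R -> cmx R) x :
  smoothM U F -> U x -> is_mxderive x (ebas R mu) F (pdM mu F x).
Proof.
move=> smF Ux i j; have [smRe smIm] := smF i j.
have [_ dRe] := smRe [::] x Ux; have [_ dIm] := smIm [::] x Ux.
by rewrite mxE; split; apply: derivableP.
Qed.

Section Hermitian.
Variable R : realType.

Lemma hconj_is_zmod_morphism : zmod_morphism (@hconj R).
Proof. by move=> A B; apply/matrixP => i j; rewrite !mxE raddfB. Qed.

HB.instance Definition _ :=
  GRing.isZmodMorphism.Build (cmx R) (cmx R) (@hconj R) hconj_is_zmod_morphism.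

Lemma hconjM (A B : cmx R) : hconj (A *m B) = hconj B *m hconj A.
Proof. by rewrite /hconj map_mxM trmx_mul. Qed.

Lemma hconjZ (c : R[i]) (A : cmx R) : hconj (c *: A) = c^*%C *: hconj A.
Proof. by apply/matrixP => i j; rewrite !mxE rmorphM. Qed.

Lemma aherm2_imul (K : cmx R) : herm2 K -> aherm2 (imul K).
Proof.
rewrite /aherm2 /imul hconjZ => ->.
by rewrite -scaleNr; congr (_ *: _); apply/eqP; rewrite eq_complex /= oppr0 !eqxx.
Qed.

Lemma pipZ (c : R[i]) (A : cmx R) : pip (c *: A) = c *: pip A.
Proof. by rewrite /pip mxtraceZ -mulrA scale_scalar_mx. Qed.

Lemma pim_imul (A : cmx R) : pim (imul A) = imul A - imul (pip A).
Proof. by rewrite /pim /imul pipZ. Qed.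

Lemma comm_pimr (C A : cmx R) : comm C (pim A) = comm C A.
Proof. by rewrite /comm /pim /pip mulmxBr mulmxBl scalar_mxC opprB addrA addrNK. Qed.

End Hermitian.

Section Divergence.
Variables (R : realType) (g : pt R -> 'M[R]_4) (x : pt R).

Lemma divME (W : 'I_4 -> pt R -> cmx R) (DW : 'I_4 -> cmx R) :
  (forall mu, is_mxderive x (ebas R mu) (W mu) (DW mu)) ->
  divM g W x = \sum_(mu < 4) DW mu +
    \sum_(mu < 4) \sum_(l < 4) rc (christoffel g mu mu l x) *: W l x.
Proof.
by move=> dW; congr (_ + _); apply: eq_bigr => mu _; apply: is_mxderive_pdM.
Qed.

Lemma divMB (W1 W2 : 'I_4 -> pt R -> cmx R) (DW1 DW2 : 'I_4 -> cmx R) :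
  (forall mu, is_mxderive x (ebas R mu) (W1 mu) (DW1 mu)) ->
  (forall mu, is_mxderive x (ebas R mu) (W2 mu) (DW2 mu)) ->
  divM g (fun mu y => W1 mu y - W2 mu y) x = divM g W1 x - divM g W2 x.
Proof.
move=> dW1 dW2; rewrite (divME (fun mu => is_mxderiveB (dW1 mu) (dW2 mu))).
rewrite (divME dW1) (divME dW2) sumrB opprD addrACA; congr (_ + _).
rewrite -sumrB; apply: eq_bigr => mu _; rewrite -sumrB.
by apply: eq_bigr => l _; rewrite scalerBr.
Qed.

Lemma divMZ (c : R[i]) (W : 'I_4 -> pt R -> cmx R) (DW : 'I_4 -> cmx R) :
  (forall mu, is_mxderive x (ebas R mu) (W mu) (DW mu)) ->
  divM g (fun mu y => c *: W mu y) x = c *: divM g W x.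
Proof.
move=> dW; rewrite (divME (fun mu => is_mxderiveZ c (dW mu))) (divME dW).
rewrite scalerDr !scaler_sumr; congr (_ + _).
apply: eq_bigr => mu _; rewrite scaler_sumr.
by apply: eq_bigr => l _; rewrite !scalerA mulrC.
Qed.

Lemma divM_sandwich (Psi : pt R -> cmx R) (DPsi : 'I_4 -> cmx R)
    (W : 'I_4 -> pt R -> cmx R) (DW : 'I_4 -> cmx R) :
  (forall mu, is_mxderive x (ebas R mu) Psi (DPsi mu)) ->
  (forall mu, is_mxderive x (ebas R mu) (W mu) (DW mu)) ->
  divM g (fun mu y => hconj (Psi y) *m W mu y *m Psi y) x =
  \sum_(mu < 4) (hconj (DPsi mu) *m W mu x *m Psi x
                 + hconj (Psi x) *m W mu x *m DPsi mu)
  + hconj (Psi x) *m divM g W x *m Psi x.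
Proof.
move=> dPsi dW.
rewrite (divME (fun mu =>
  is_mxderiveM (is_mxderiveM (is_mxderive_hconj (dPsi mu)) (dW mu)) (dPsi mu))).
rewrite (divME dW) mulmxDr mulmxDl addrA; congr (_ + _).
  rewrite mulmx_sumr mulmx_suml -big_split; apply: eq_bigr => mu _.
  by rewrite mulmxDl addrAC.
rewrite mulmx_sumr mulmx_suml; apply: eq_bigr => mu _.
rewrite mulmx_sumr mulmx_suml; apply: eq_bigr => l _.
by rewrite -scalemxAr -scalemxAl.
Qed.

End Divergence.

Lemma mulmx2E (T : pzSemiRingType) (A B : 'M[T]_2) i j :
  (A *m B) i j = A i ord0 * B ord0 j + A i ord_max * B ord_max j.
Proof.
rewrite mxE big_ord_recl big_ord1.
by have -> : lift ord0 ord0 = ord_max :> 'I_2 by apply: val_inj.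
Qed.

Lemma current_identity (R : realType) (M A C P P' : cmx R) :
  aherm2 M -> aherm2 A -> aherm2 C ->
  hconj P' *m M *m P + hconj P *m M *m P' - comm A (hconj P *m M *m P)
    + hconj P *m comm C M *m P
  = hconj P *m (M *m (P' - C *m P + P *m A))
    - hconj (M *m (P' - C *m P + P *m A)) *m P.
Proof.
move=> hM hA hC.
rewrite hconjM (raddfD (@hconj R)) (raddfB (@hconj R)) /= !hconjM hM hA hC /comm.
by apply/matrixP => i j; rewrite !(mulmx2E, mxE); ring.
Qed.

Lemma current_sum_identity (R : realType) n (M A C : 'I_n -> cmx R)
    (P : cmx R) (P' : 'I_n -> cmx R) :
  (forall mu, aherm2 (M mu)) -> (forall mu, aherm2 (A mu)) ->
  (forall mu, aherm2 (C mu)) ->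
  let E := \sum_(mu < n) M mu *m (P' mu - C mu *m P + P *m A mu) in
  \sum_(mu < n) (hconj (P' mu) *m M mu *m P + hconj P *m M mu *m P' mu)
  - \sum_(mu < n) comm (A mu) (hconj P *m M mu *m P)
  + hconj P *m (\sum_(mu < n) comm (C mu) (M mu)) *m P
  = hconj P *m E - hconj E *m P.
Proof.
move=> hM hA hC E.
rewrite mulmx_sumr mulmx_suml -sumrB -big_split /=.
rewrite (eq_bigr _ (fun mu _ => current_identity P (P' mu) (hM mu) (hA mu) (hC mu))).
by rewrite sumrB -mulmx_sumr -mulmx_suml -raddf_sum.
Qed.

Unset Implicit Arguments.

Theorem theorem3 (R : realType) (U : set ('rV[R]_4))
  (g : 'rV[R]_4 -> 'M[R]_4)
  (K A C : 'I_4 -> 'rV[R]_4 -> 'M[R[i]]_2)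
  (Psi : 'rV[R]_4 -> 'M[R[i]]_2) :
  open U ->
  lorentzian_metric U g ->
  (* (a) *)
  (forall mu, smoothM U (K mu)) ->
  (forall mu x, U x -> herm2 (K mu x)) ->
  (forall mu nu x, U x ->
     K mu x *m tld (K nu x) + K nu x *m tld (K mu x)
     = (rc (ginv g x mu nu) *+ 2)%:M) ->
  (forall x, U x -> divM g (fun mu y => pip (K mu y)) x = 0) ->
  (* (b) *)
  (forall mu, smoothM U (A mu)) ->
  (forall mu, smoothM U (C mu)) ->
  (forall mu x, U x -> aherm2 (A mu x)) ->
  (forall mu x, U x -> in_su2 (C mu x)) ->
  (* (c) *)
  smoothM U Psi ->
  (forall x, U x ->
     \sum_(mu < 4) imul (K mu x) *m
        (pdM mu Psi x - C mu x *m Psi x + Psi x *m A mu x) = 0) ->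
  forall x, U x ->
    (divM g (fun mu y => hconj (Psi y) *m imul (K mu y) *m Psi y) x
     - \sum_(mu < 4) comm (A mu x) (hconj (Psi x) *m imul (K mu x) *m Psi x))
    - hconj (Psi x) *m
        (divM g (fun mu y => pim (imul (K mu y))) x
         - \sum_(mu < 4) comm (C mu x) (pim (imul (K mu x)))) *m Psi x
    = 0.
Proof.
move=> _ _ smK hermK _ div_pipK _ _ ahermA su2C smPsi dirac x Ux.
have dPsi mu := smoothM_is_mxderive mu smPsi Ux.
have dK mu := smoothM_is_mxderive mu (smK mu) Ux.
have dimulK mu :
    is_mxderive x (ebas R mu) (fun y => imul (K mu y)) (imul (pdM mu (K mu) x)).
  exact: is_mxderiveZ.
have div_pim : divM g (fun mu y => pim (imul (K mu y))) x =
               divM g (fun mu y => imul (K mu y)) x.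
  under eq_fun do under eq_fun do rewrite pim_imul.
  rewrite (divMB _ dimulK (fun mu => is_mxderiveZ _ (is_mxderive_pip (dK mu)))).
  rewrite /imul (divMZ _ _ (fun mu => is_mxderive_pip (dK mu))).
  by rewrite div_pipK // scaler0 subr0.
rewrite (divM_sandwich _ dPsi dimulK) div_pim.
have -> : \sum_(mu < 4) comm (C mu x) (pim (imul (K mu x))) =
          \sum_(mu < 4) comm (C mu x) (imul (K mu x)).
  by apply: eq_bigr => mu _; apply: comm_pimr.
set T := hconj (Psi x) *m _ *m Psi x.
rewrite mulmxBr mulmxBl -/T addrAC addrKA opprK addrAC.
rewrite (current_sum_identity _ _ (fun mu => aherm2_imul (hermK mu x Ux))
  (fun mu => ahermA mu x Ux) (fun mu => (su2C mu x Ux).1)) /= dirac //.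
by rewrite !raddf0 mul0mx subr0.
Qed.
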